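(* Let $H$ be the face algebra described in the context. Then the braided Hopf algebra ${}_RH=C_H(H_s)$ is the $\mathbb C$-linear span of $\{X^i_i(p):i,p\in\mathbb Z_N\}$, with $$X^i_i(p)X^k_k(q)=\delta_{i,k}\delta_{p,q}X^i_i(p),\qquad 1=\sum_{i,p}X^i_i(p),$$ $$\underline\Delta(X^k_k(s))=\sum_{w+q=s}X^k_k(w)\otimes X^k_k(q),\qquad \varepsilon_t(X^i_i(s))=\delta_{s,0}\sum_pX^i_i(p),\qquad \underline S(X^k_k(s))=X^k_k(-s).$$
   Context: Let $N\ge2$, $\mathbb Z_N=\mathbb Z/N\mathbb Z$, $\omega\in\mathbb C$ a primitive $N$th root of unity. $H$ is the $\mathbb C$-vector space with basis $\{X^i_j(s):i,j,s\in\mathbb Z_N\}$, with multiplication $X^i_j(p)X^k_l(q)=\delta_{j,k}\delta_{p,q}X^i_l(p)$, unit $1=\sum_{i,p}X^i_i(p)$, comultiplication $\Delta(X^i_j(s))=\sum_{p+q=s}X^i_j(p)\otimes X^{i+p}_{j+p}(q)$, counit $\varepsilon(X^i_j(s))=\delta_{s,0}$, antipode $S(X^i_j(p))=X^{j+p}_{i+p}(-p)$, and $R=\sum_{i,j,p}X^i_j(p)\otimes X^j_{j+p}(i-j)\omega^{-p(i-j)}$, $\bar R=\sum_{i,j,p}X^{j+p}_{i+p}(-p)\otimes X^j_{j+p}(i-j)\omega^{-p(i-j)}$; $(H,R)$ is a quasitriangular weak Hopf algebra (Hayashi's face algebra). Its target subalgebra $H_t=\varepsilon_t(H)$, $\varepsilon_t(h)=\varepsilon(1_1h)1_2$,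 is $\bigoplus_i\mathbb C1^i$ with $1^i=\sum_pX^i_i(p)$; $\varepsilon_s(h)=1_1\varepsilon(h1_2)$, $H_s=\varepsilon_s(H)$. For a quasitriangular weak Hopf algebra, ${}_RH$ denotes $C_H(H_s)=\{1_1hS(1_2):h\in H\}$ with adjoint action $h\cdot x=h_1xS(h_2)$, multiplication $a\otimes b\mapsto(1_1\cdot a)(1_2\cdot b)$, comultiplication $\underline\Delta(x)=x_1S(R^2)\otimes R^1\cdot x_2$, counit $\varepsilon_t$, antipode $\underline S(x)=R^2R'^2S(R^1xS(R'^1))$ ($R'$ another copy of $R$). *)

From HB Require Import structures.
From mathcomp Require Import all_boot all_order all_algebra all_field.
Set Implicit Arguments. Unset Strict Implicit. Unset Printing Implicit Defensive.
Import GRing.Theory Num.Theory.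
Local Open Scope ring_scope.

Section FaceAlgebra.
Variable N : nat.
(* primitive N-th root of unity omega *)
Variable w : algC.

(* basis index (i, j, s) of X^i_j(s) *)
Definition idx := ('Z_N * 'Z_N * 'Z_N)%type.
(* elements of H: coefficient vectors w.r.t. the basis {X^i_j(s)} *)
Definition H := {ffun idx -> algC}.
(* elements of H (x) H: coefficients w.r.t. the basis {X_b (x) X_c} *)
Definition HH := {ffun (idx * idx) -> algC}.

Definition hscale (c : algC) (a : H) : H := [ffun t => c * a t].
Definition hhscale (c : algC) (a : HH) : HH := [ffun t => c * a t].

Definition X (i j s : 'Z_N) : H := [ffun t => (t == (i, j, s))%:R].
Definition Xb (t : idx) : H := X t.1.1 t.1.2 t.2.

Definition tens (a b : H) : HH := [ffun t => a t.1 * b t.2].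

Definition lin (f : idx -> H) (a : H) : H := \sum_(t : idx) hscale (a t) (f t).
Definition lin2 (f : idx -> HH) (a : H) : HH := \sum_(t : idx) hhscale (a t) (f t).

(* multiplication: X^i_j(p) X^k_l(q) = d_{j,k} d_{p,q} X^i_l(p) *)
Definition mulX (s t : idx) : H :=
  hscale ((s.1.2 == t.1.1) && (s.2 == t.2))%:R (X s.1.1 t.1.2 s.2).
Definition Hmul (a b : H) : H :=
  \sum_(s : idx) \sum_(t : idx) hscale (a s * b t) (mulX s t).

Definition Hone : H := \sum_(i : 'Z_N) \sum_(p : 'Z_N) X i i p.

(* comultiplication: Delta(X^i_j(s)) = sum_{p+q=s} X^i_j(p) (x) X^{i+p}_{j+p}(q) *)
Definition DeltaX (t : idx) : HH :=
  let: (i, j, s) := t in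
  \sum_(pq : 'Z_N * 'Z_N | pq.1 + pq.2 == s)
     tens (X i j pq.1) (X (i + pq.1) (j + pq.1) pq.2).
Definition Delta (a : H) : HH := lin2 DeltaX a.

Definition eps (a : H) : algC := \sum_(t : idx) a t * (t.2 == 0)%:R.

Definition SX (t : idx) : H :=
  let: (i, j, p) := t in X (j + p) (i + p) (- p).
Definition S (a : H) : H := lin SX a.

Definition Rmat : HH :=
  \sum_(i : 'Z_N) \sum_(j : 'Z_N) \sum_(p : 'Z_N)
     hhscale (w ^- (nat_of_ord (p * (i - j)))) (tens (X i j p) (X j (j + p) (i - j))).

(* Sweedler-style evaluation of a bilinear expression f(T^1, T^2) on a tensor
   T = sum_{b,c} T(b,c) X_b (x) X_c *)
Definition tapp (f : H -> H -> H) (T : HH) : H :=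
  \sum_(b : idx) \sum_(c : idx) hscale (T (b, c)) (f (Xb b) (Xb c)).
Definition tapp2 (f : H -> H -> HH) (T : HH) : HH :=
  \sum_(b : idx) \sum_(c : idx) hhscale (T (b, c)) (f (Xb b) (Xb c)).

(* eps_t(h) = eps(1_1 h) 1_2 ;  eps_s(h) = 1_1 eps(h 1_2) *)
Definition eps_t (h : H) : H := tapp (fun u v => hscale (eps (Hmul u h)) v) (Delta Hone).
Definition eps_s (h : H) : H := tapp (fun u v => hscale (eps (Hmul h v)) u) (Delta Hone).

Definition in_Hs (y : H) : Prop := exists h : H, y = eps_s h.

Definition in_RH (x : H) : Prop := forall y : H, in_Hs y -> Hmul x y = Hmul y x.

(* adjoint action h . x = h_1 x S(h_2) *)
Definition adj (h x : H) : H := tapp (fun u v => Hmul (Hmul u x) (S v)) (Delta h).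

(* braided multiplication a (x) b |-> (1_1 . a)(1_2 . b) *)
Definition bmul (a b : H) : H := tapp (fun u v => Hmul (adj u a) (adj v b)) (Delta Hone).

(* braided comultiplication x_1 S(R^2) (x) R^1 . x_2 *)
Definition bDelta (x : H) : HH :=
  tapp2 (fun x1 x2 => tapp2 (fun r1 r2 => tens (Hmul x1 (S r2)) (adj r1 x2)) Rmat) (Delta x).

(* braided antipode R^2 R'^2 S(R^1 x S(R'^1)) *)
Definition bS (x : H) : H :=
  tapp (fun r1 r2 => tapp (fun r1' r2' =>
     Hmul (Hmul r2 r2') (S (Hmul (Hmul r1 x) (S r1')))) Rmat) Rmat.

End FaceAlgebra.

From HB Require Import structures.
From mathcomp Require Import all_boot all_order all_algebra all_field.
From mathcomp Require Import ring.
Import GRing.Theory Num.Theory.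
Set Implicit Arguments. Unset Strict Implicit. Unset Printing Implicit Defensive.
Local Open Scope ring_scope.

(* The only fact about
      omega that is needed is omega^{-a} omega^{-b} = 1 whenever a + b = 0.
   3. The centralizer: eps_s(H) lies in the diagonal span, so diagonal
      vectors centralize it; conversely commuting with
      eps_s(X^l_l(0)) = sum_j X^j_j(l - j) for all l kills every
      off-diagonal coefficient. *)

Section FaceAlgebra.
Variable N : nat.
Local Notation H := (H N).
Local Notation HH := (HH N).
Local Notation idx := (idx N).
Local Notation X := (@X N).
Local Notation Xb := (@Xb N).
Local Notation hscale := (@hscale N).
Local Notation hhscale := (@hhscale N).
Local Notation lin := (@lin N).
Local Notation lin2 := (@lin2 N).
Local Notation tapp := (@tapp N).
Local Notation tapp2 := (@tapp2 N).
Local Notation tens := (@tens N).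
Local Notation Hmul := (@Hmul N).
Local Notation S := (@S N).
Local Notation Delta := (@Delta N).
Local Notation eps := (@eps N).
Local Notation adj := (@adj N).
Local Notation in_RH := (@in_RH N).

Lemma hscale0r (a : H) : hscale 0 a = 0.
Proof. by apply/ffunP=> t; rewrite !ffunE mul0r. Qed.
Lemma hscale1r (a : H) : hscale 1 a = a.
Proof. by apply/ffunP=> t; rewrite !ffunE mul1r. Qed.
Lemma hscaler0 c : hscale c 0 = 0.
Proof. by apply/ffunP=> t; rewrite !ffunE mulr0. Qed.
Lemma hscaleA c d (a : H) : hscale c (hscale d a) = hscale (c * d) a.
Proof. by apply/ffunP=> t; rewrite !ffunE mulrA. Qed.
Lemma hscaleDr c (a b : H) : hscale c (a + b) = hscale c a + hscale c b.
Proof. by apply/ffunP=> t; rewrite !ffunE mulrDr. Qed.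
Lemma hscale_sum (I : Type) (r : seq I) (P : pred I) c (F : I -> H) :
  hscale c (\sum_(i <- r | P i) F i) = \sum_(i <- r | P i) hscale c (F i).
Proof. exact: (big_morph _ (hscaleDr c) (hscaler0 c)). Qed.

Lemma hhscale0r (a : HH) : hhscale 0 a = 0.
Proof. by apply/ffunP=> t; rewrite !ffunE mul0r. Qed.
Lemma hhscale1r (a : HH) : hhscale 1 a = a.
Proof. by apply/ffunP=> t; rewrite !ffunE mul1r. Qed.
Lemma hhscaler0 c : hhscale c 0 = 0.
Proof. by apply/ffunP=> t; rewrite !ffunE mulr0. Qed.
Lemma hhscaleA c d (a : HH) : hhscale c (hhscale d a) = hhscale (c * d) a.
Proof. by apply/ffunP=> t; rewrite !ffunE mulrA. Qed.
Lemma hhscaleDr c (a b : HH) : hhscale c (a + b) = hhscale c a + hhscale c b.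
Proof. by apply/ffunP=> t; rewrite !ffunE mulrDr. Qed.
Lemma hhscale_sum (I : Type) (r : seq I) (P : pred I) c (F : I -> HH) :
  hhscale c (\sum_(i <- r | P i) F i) = \sum_(i <- r | P i) hhscale c (F i).
Proof. exact: (big_morph _ (hhscaleDr c) (hhscaler0 c)). Qed.

Lemma tensZl c a b : tens (hscale c a) b = hhscale c (tens a b).
Proof. by apply/ffunP=> t; rewrite !ffunE mulrA. Qed.
Lemma tensZr c a b : tens a (hscale c b) = hhscale c (tens a b).
Proof. by apply/ffunP=> t; rewrite !ffunE mulrCA. Qed.

(* [vanish h] kills a term whose scalar contains a Kronecker delta falsified by
   [h]; [vanish_sums h] first descends through nested sums all of whose terms
   carry that delta. *)
Ltac vanish h := rewrite ?(negbTE h) ?andbF ?andFb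
  ?(mulr0n, mul0r, mulr0, hscale0r, hscaler0, hhscale0r, hhscaler0).
Ltac vanish_sums h := do ?[apply: big1 => ? _]; vanish h.

Lemma XE i j s t : X i j s t = (t == (i, j, s))%:R.
Proof. by rewrite ffunE. Qed.

Lemma sift i j s (F : idx -> H) :
  \sum_t hscale (X i j s t) (F t) = F (i, j, s).
Proof.
rewrite (big_only1 (i, j, s)) // ?XE ?eqxx ?hscale1r // => t ht _.
by rewrite XE (negbTE ht) hscale0r.
Qed.
Lemma sift2 i j s (F : idx -> HH) :
  \sum_t hhscale (X i j s t) (F t) = F (i, j, s).
Proof.
rewrite (big_only1 (i, j, s)) // ?XE ?eqxx ?hhscale1r // => t ht _.
by rewrite XE (negbTE ht) hhscale0r.
Qed.

Lemma linX f i j s : lin f (X i j s) = f (i, j, s).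
Proof. exact: sift. Qed.
Lemma lin2X f i j s : lin2 f (X i j s) = f (i, j, s).
Proof. exact: sift2. Qed.
Lemma linZ f c a : lin f (hscale c a) = hscale c (lin f a).
Proof.
rewrite /lin hscale_sum; apply: eq_bigr => t _.
by rewrite ffunE hscaleA.
Qed.
Lemma lin2D f a b : lin2 f (a + b) = lin2 f a + lin2 f b.
Proof.
rewrite /lin2 -big_split /=; apply: eq_bigr => t _.
by apply/ffunP=> u; rewrite !ffunE mulrDl.
Qed.
Lemma lin20 f : lin2 f 0 = 0.
Proof. by rewrite /lin2 big1 // => t _; rewrite ffunE hhscale0r. Qed.

Lemma tappD f (T1 T2 : HH) : tapp f (T1 + T2) = tapp f T1 + tapp f T2.
Proof.
rewrite /tapp -big_split /=; apply: eq_bigr => b _.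
rewrite -big_split /=; apply: eq_bigr => c _.
by apply/ffunP=> u; rewrite !ffunE mulrDl.
Qed.
Lemma tapp0 f : tapp f 0 = 0.
Proof.
by rewrite /tapp big1 // => b _; rewrite big1 // => c _; rewrite ffunE hscale0r.
Qed.
Lemma tappZ f c T : tapp f (hhscale c T) = hscale c (tapp f T).
Proof.
rewrite /tapp hscale_sum; apply: eq_bigr => b _.
rewrite hscale_sum; apply: eq_bigr => d _.
by rewrite ffunE hscaleA.
Qed.
Lemma tapp_sum f (I : Type) (r : seq I) (P : pred I) (F : I -> HH) :
  tapp f (\sum_(i <- r | P i) F i) = \sum_(i <- r | P i) tapp f (F i).
Proof. exact: (big_morph _ (tappD f) (tapp0 f)). Qed.
Lemma tapp_tens f a b c d e g :
  tapp f (tens (X a b c) (X d e g)) = f (X a b c) (X d e g).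
Proof.
rewrite /tapp.
transitivity (\sum_t hscale (X a b c t)
                 (\sum_u hscale (X d e g u) (f (Xb t) (Xb u)))).
  apply: eq_bigr => t _; rewrite hscale_sum; apply: eq_bigr => u _.
  by rewrite ffunE hscaleA.
by rewrite !sift.
Qed.

Lemma tapp2D f (T1 T2 : HH) : tapp2 f (T1 + T2) = tapp2 f T1 + tapp2 f T2.
Proof.
rewrite /tapp2 -big_split /=; apply: eq_bigr => b _.
rewrite -big_split /=; apply: eq_bigr => c _.
by apply/ffunP=> u; rewrite !ffunE mulrDl.
Qed.
Lemma tapp20 f : tapp2 f 0 = 0.
Proof.
by rewrite /tapp2 big1 // => b _; rewrite big1 // => c _; rewrite ffunE hhscale0r.
Qed.
Lemma tapp2Z f c T : tapp2 f (hhscale c T) = hhscale c (tapp2 f T).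
Proof.
rewrite /tapp2 hhscale_sum; apply: eq_bigr => b _.
rewrite hhscale_sum; apply: eq_bigr => d _.
by rewrite ffunE hhscaleA.
Qed.
Lemma tapp2_sum f (I : Type) (r : seq I) (P : pred I) (F : I -> HH) :
  tapp2 f (\sum_(i <- r | P i) F i) = \sum_(i <- r | P i) tapp2 f (F i).
Proof. exact: (big_morph _ (tapp2D f) (tapp20 f)). Qed.
Lemma tapp2_tens f a b c d e g :
  tapp2 f (tens (X a b c) (X d e g)) = f (X a b c) (X d e g).
Proof.
rewrite /tapp2.
transitivity (\sum_t hhscale (X a b c t)
                 (\sum_u hhscale (X d e g u) (f (Xb t) (Xb u)))).
  apply: eq_bigr => t _; rewrite hhscale_sum; apply: eq_bigr => u _.
  by rewrite ffunE hhscaleA.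
by rewrite !sift2.
Qed.

Lemma HmulDl a b c : Hmul a (b + c) = Hmul a b + Hmul a c.
Proof.
rewrite /Hmul -big_split /=; apply: eq_bigr => s _.
rewrite -big_split /=; apply: eq_bigr => t _.
by apply/ffunP=> u; rewrite !ffunE mulrDr mulrDl.
Qed.
Lemma HmulDr a b c : Hmul (a + b) c = Hmul a c + Hmul b c.
Proof.
rewrite /Hmul -big_split /=; apply: eq_bigr => s _.
rewrite -big_split /=; apply: eq_bigr => t _.
by apply/ffunP=> u; rewrite !ffunE !mulrDl.
Qed.
Lemma Hmul0l a : Hmul 0 a = 0.
Proof.
by rewrite /Hmul big1 // => s _; rewrite big1 // => t _; rewrite ffunE mul0r hscale0r.
Qed.
Lemma Hmul0r a : Hmul a 0 = 0.
Proof.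
by rewrite /Hmul big1 // => s _; rewrite big1 // => t _; rewrite ffunE mulr0 hscale0r.
Qed.
Lemma HmulZl c a b : Hmul (hscale c a) b = hscale c (Hmul a b).
Proof.
rewrite /Hmul hscale_sum; apply: eq_bigr => s _.
rewrite hscale_sum; apply: eq_bigr => t _.
by rewrite ffunE hscaleA mulrA.
Qed.
Lemma HmulZr c a b : Hmul a (hscale c b) = hscale c (Hmul a b).
Proof.
rewrite /Hmul hscale_sum; apply: eq_bigr => s _.
rewrite hscale_sum; apply: eq_bigr => t _.
by rewrite ffunE hscaleA mulrCA.
Qed.
Lemma Hmul_suml (I : Type) (r : seq I) (P : pred I) (F : I -> H) b :
  Hmul (\sum_(i <- r | P i) F i) b = \sum_(i <- r | P i) Hmul (F i) b.
Proof. exact: (big_morph (Hmul^~ b) (fun x y => HmulDr x y b) (Hmul0l b)). Qed.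
Lemma Hmul_sumr (I : Type) (r : seq I) (P : pred I) (F : I -> H) b :
  Hmul b (\sum_(i <- r | P i) F i) = \sum_(i <- r | P i) Hmul b (F i).
Proof. exact: (big_morph (Hmul b) (HmulDl b) (Hmul0r b)). Qed.

Lemma HmulX i j p k l q :
  Hmul (X i j p) (X k l q) = hscale ((j == k) && (p == q))%:R (X i l p).
Proof.
rewrite /Hmul.
transitivity (\sum_s hscale (X i j p s)
                 (\sum_t hscale (X k l q t) (mulX s t))).
  apply: eq_bigr => s _; rewrite hscale_sum; apply: eq_bigr => t _.
  by rewrite hscaleA.
by rewrite !sift.
Qed.
Lemma SX i j p : S (X i j p) = X (j + p) (i + p) (- p).
Proof. exact: linX. Qed.
Lemma SZ c a : S (hscale c a) = hscale c (S a).
Proof. exact: linZ. Qed.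
Lemma DeltaXE i j s : Delta (X i j s) = DeltaX (i, j, s).
Proof. exact: lin2X. Qed.
Lemma Delta_sum (I : Type) (r : seq I) (P : pred I) (F : I -> H) :
  Delta (\sum_(i <- r | P i) F i) = \sum_(i <- r | P i) Delta (F i).
Proof. exact: (big_morph _ (lin2D _) (lin20 _)). Qed.
Lemma epsZ c a : eps (hscale c a) = c * eps a.
Proof. by rewrite /eps mulr_sumr; apply: eq_bigr => t _; rewrite ffunE mulrA. Qed.
Lemma epsX i j s : eps (X i j s) = (s == 0)%:R.
Proof.
rewrite /eps (big_only1 (i, j, s)) // ?XE ?eqxx ?mul1r // => t ht _.
by rewrite XE (negbTE ht) mul0r.
Qed.

Lemma sum_decomp (V : zmodType) s (F : 'Z_N * 'Z_N -> V) :
  \sum_(ab : 'Z_N * 'Z_N | ab.1 + ab.2 == s) F ab = \sum_(a : 'Z_N) F (a, s - a).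
Proof.
transitivity (\sum_(a : 'Z_N) \sum_(b : 'Z_N | a + b == s) F (a, b)).
  by rewrite pair_big_dep; apply: eq_big => [[a b]|[a b] _].
apply: eq_bigr => a _; rewrite (big_pred1 (s - a)) // => b /=.
by apply/eqP/eqP => [<-|->]; ring.
Qed.

Lemma Delta_one : Delta (Hone N) = \sum_(j : 'Z_N) \sum_(p : 'Z_N) \sum_(a : 'Z_N)
   tens (X j j a) (X (j + a) (j + a) (p - a)).
Proof.
rewrite /Hone Delta_sum; apply: eq_bigr => j _.
rewrite Delta_sum; apply: eq_bigr => p _.
by rewrite DeltaXE /= sum_decomp.
Qed.

Lemma tapp_Delta_one f : tapp f (Delta (Hone N)) =
  \sum_(j : 'Z_N) \sum_(p : 'Z_N) \sum_(a : 'Z_N) f (X j j a) (X (j + a) (j + a) (p - a)).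
Proof.
rewrite Delta_one tapp_sum; apply: eq_bigr => j _.
rewrite tapp_sum; apply: eq_bigr => p _.
by rewrite tapp_sum; apply: eq_bigr => a _; rewrite tapp_tens.
Qed.

Lemma adj_X_diag i j s k q :
  adj (X i j s) (X k k q) = hscale ((j == k) && (s == 0))%:R (X i i q).
Proof.
rewrite /adj DeltaXE /= tapp_sum sum_decomp.
under eq_bigr do rewrite tapp_tens /= HmulX SX HmulZl HmulX hscaleA.
rewrite (big_only1 q) // => [|a ha _]; last by vanish ha.
rewrite eqxx andbT.
have -> : j + q + (s - q) = j + s by ring.
have -> : i + q + (s - q) = i + s by ring.
have [->|hjk] := eqVneq j k; last by vanish hjk.
have [->|hs] := eqVneq s 0.
  by rewrite !addr0 !eqxx /= (_ : - (0 - q) = q) ?eqxx ?mul1r //; ring.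
have hks : (k == k + s) = false.
  by apply/negbTE; apply: contra hs => /eqP h; rewrite -(addKr k s) -h addNr.
by rewrite hks /= mulr0 !hscale0r.
Qed.

Lemma bmul_X_diag i k p q :
  bmul (X i i p) (X k k q) = hscale ((i == k) && (p == q))%:R (X i i p).
Proof.
rewrite /bmul tapp_Delta_one.
under eq_bigr do under eq_bigr do under eq_bigr do
  rewrite !adj_X_diag HmulZl HmulZr HmulX !hscaleA.
rewrite (big_only1 i) // => [|j hj _]; last by vanish_sums hj.
rewrite (big_only1 0) // => [|p' hp _]; last first.
  rewrite big1 // => a _.
  have [->|ha] := eqVneq a 0; last by vanish ha.
  by rewrite subr0; vanish hp.
rewrite (big_only1 0) // => [|a ha _]; last by vanish ha.
by rewrite !addr0 subrr !eqxx /= andbT mul1r -natrM mulnb.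
Qed.

Lemma eps_t_X_diag i s :
  eps_t (X i i s) = hscale (s == 0)%:R (\sum_(p : 'Z_N) X i i p).
Proof.
rewrite /eps_t tapp_Delta_one.
under eq_bigr do under eq_bigr do under eq_bigr do rewrite HmulX epsZ epsX.
rewrite (big_only1 i) // => [|j hj _]; last by vanish_sums hj.
rewrite hscale_sum; apply: eq_bigr => p _.
rewrite (big_only1 s) // => [|a ha _]; last by vanish ha.
rewrite !eqxx /= mul1r.
have [->|hs] := eqVneq s 0; last by vanish hs.
by rewrite addr0 subr0.
Qed.

Definition diagsum (c : 'Z_N -> 'Z_N -> algC) : H :=
  \sum_(i : 'Z_N) \sum_(p : 'Z_N) hscale (c i p) (X i i p).

Lemma coord_sum (f : idx -> algC) u : (\sum_t hscale (f t) (Xb t)) u = f u.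
Proof.
rewrite sum_ffunE (big_only1 u) // => [|t ht _].
  by rewrite ffunE /Xb XE -!surjective_pairing eqxx mulr1.
by rewrite ffunE /Xb XE -!surjective_pairing eq_sym (negbTE ht) mulr0.
Qed.
Lemma basis_expansion (x : H) : x = \sum_t hscale (x t) (Xb t).
Proof. by apply/ffunP=> u; rewrite coord_sum. Qed.

Lemma comm_sum (I : Type) (r : seq I) (a : H) (F : I -> H) :
  (forall i, Hmul a (F i) = Hmul (F i) a) ->
  Hmul a (\sum_(i <- r) F i) = Hmul (\sum_(i <- r) F i) a.
Proof. by move=> h; rewrite Hmul_sumr Hmul_suml; apply: eq_bigr. Qed.

Lemma comm_diagsum a c :
  (forall i p, Hmul a (X i i p) = Hmul (X i i p) a) ->
  Hmul a (diagsum c) = Hmul (diagsum c) a.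
Proof.
move=> h; apply: comm_sum => i; apply: comm_sum => p.
by rewrite HmulZr HmulZl h.
Qed.

Lemma diagsum_comm c d : Hmul (diagsum c) (diagsum d) = Hmul (diagsum d) (diagsum c).
Proof.
apply: comm_diagsum => j q; symmetry; apply: comm_diagsum => i p.
rewrite !HmulX [j == i]eq_sym [q == p]eq_sym.
have [->|nij] := eqVneq i j; last by vanish nij.
by have [->|npq] := eqVneq p q; last by vanish npq.
Qed.

(* eps_s maps H into the diagonal span; hence diagonal vectors centralize H_s. *)
Lemma eps_s_diagsum h : exists d, eps_s h = diagsum d.
Proof.
rewrite /eps_s tapp_Delta_one.
exists (fun j a => \sum_(p : 'Z_N) eps (Hmul h (X (j + a) (j + a) (p - a)))).
rewrite /diagsum; apply: eq_bigr => j _.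
rewrite exchange_big /=; apply: eq_bigr => a _.
apply/ffunP => t; rewrite !ffunE sum_ffunE mulr_suml.
by apply: eq_bigr => p _; rewrite ffunE XE.
Qed.

Lemma diagsum_in_RH c : in_RH (diagsum c).
Proof. by move=> _ [h ->]; have [d ->] := eps_s_diagsum h; apply: diagsum_comm. Qed.

Definition Hs_gen (l : 'Z_N) : H := \sum_(j : 'Z_N) X j j (l - j).

Lemma eps_s_X_diag0 l : eps_s (X l l 0) = Hs_gen l.
Proof.
rewrite /eps_s tapp_Delta_one /Hs_gen; apply: eq_bigr => j _.
under eq_bigr do under eq_bigr do rewrite HmulX epsZ epsX.
rewrite (big_only1 (l - j)) // => [|p hp _]; last first.
  rewrite big1 // => a _.
  have [ha|ha] := eqVneq l (j + a); last by vanish ha.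
  have -> : (0 == p - a) = false.
    apply/negbTE; apply: contra hp => /eqP h; apply/eqP.
    by rewrite -(subrK a p) -h ha; ring.
  by vanish ha.
rewrite (big_only1 (l - j)) // => [|a ha _]; last first.
  have -> : (l == j + a) = false.
    by apply/negbTE; apply: contra ha => /eqP ->; apply/eqP; ring.
  by vanish ha.
have -> : j + (l - j) = l by ring.
by rewrite subrr !eqxx mul1r hscale1r.
Qed.

Lemma X_mul_Hs_gen a b c l :
  Hmul (X a b c) (Hs_gen l) = hscale (c == l - b)%:R (X a b c).
Proof.
rewrite Hmul_sumr; under eq_bigr do rewrite HmulX.
rewrite (big_only1 b) // => [|j hj _]; first by rewrite eqxx.
by rewrite eq_sym; vanish hj.
Qed.
Lemma Hs_gen_mul_X a b c l :
  Hmul (Hs_gen l) (X a b c) = hscale (a == l - c)%:R (X a b c).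
Proof.
rewrite Hmul_suml; under eq_bigr do rewrite HmulX.
rewrite (big_only1 a) // => [|j hj _]; last by vanish hj.
rewrite eqxx /=.
have [e|ne] := eqVneq (l - a) c.
  have -> : (a == l - c) = true by rewrite -e; apply/eqP; ring.
  by rewrite e.
have -> : (a == l - c) = false.
  by apply/negbTE; apply: contra ne => /eqP ->; apply/eqP; ring.
by rewrite !hscale0r.
Qed.

Lemma coef_mul_Hs_gen (x : H) l t :
  (Hmul x (Hs_gen l)) t = x t * (t.2 == l - t.1.2)%:R
  /\ (Hmul (Hs_gen l) x) t = x t * (t.1.1 == l - t.2)%:R.
Proof.
have -> : Hmul x (Hs_gen l) = \sum_u hscale (x u * (u.2 == l - u.1.2)%:R) (Xb u).
  rewrite {1}(basis_expansion x) Hmul_suml; apply: eq_bigr => u _.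
  by rewrite HmulZl X_mul_Hs_gen hscaleA.
have -> : Hmul (Hs_gen l) x = \sum_u hscale (x u * (u.1.1 == l - u.2)%:R) (Xb u).
  rewrite {1}(basis_expansion x) Hmul_sumr; apply: eq_bigr => u _.
  by rewrite HmulZr Hs_gen_mul_X hscaleA.
by rewrite !coord_sum.
Qed.

(* An element of the centralizer has no off-diagonal coefficients: compare
   the X^i_j(p)-coefficients of x eps_s(X^{j+p}_{j+p}(0)) and
   eps_s(X^{j+p}_{j+p}(0)) x. *)
Lemma in_RH_offdiag x i j p : in_RH x -> i != j -> x (i, j, p) = 0.
Proof.
move=> xRH nij.
have := xRH _ (ex_intro _ (X (j + p) (j + p) 0) erefl).
rewrite eps_s_X_diag0 => /(congr1 (fun z : H => z (i, j, p))).
have [-> ->] := coef_mul_Hs_gen x (j + p) (i, j, p); rewrite /=.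
have -> : j + p - j = p by ring.
have -> : j + p - p = j by ring.
by rewrite eqxx (negbTE nij) mulr1 mulr0.
Qed.

Lemma in_RH_diagsum x : in_RH x <-> exists c, x = diagsum c.
Proof.
split=> [xRH|[c ->]]; last exact: diagsum_in_RH.
exists (fun i p => x (i, i, p)); apply/ffunP => [[[a b] c]].
rewrite sum_ffunE (big_only1 a) // => [|i hi _]; last first.
  rewrite sum_ffunE big1 // => p _.
  by rewrite ffunE XE !xpair_eqE eq_sym (negbTE hi) mulr0.
rewrite sum_ffunE (big_only1 c) // => [|p hp _]; last first.
  by rewrite ffunE XE !xpair_eqE (eq_sym c) (negbTE hp) andbF mulr0.
rewrite ffunE XE !xpair_eqE !eqxx /=.
have [->|nba] := eqVneq b a; first by rewrite mulr1.
by rewrite mulr0 (in_RH_offdiag _ xRH) // eq_sym.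
Qed.

Section Braiding.
Variable w : algC.
Local Notation Rmat := (@Rmat N w).

(* The braided coproduct of a diagonal vector: for each term x_1 (x) x_2 of
   Delta(x) exactly one component of R contributes, one with p = 0 and hence
   with weight omega^0 = 1. *)
Lemma bDelta_X_diag k s :
  bDelta w (X k k s)
  = \sum_(ab : 'Z_N * 'Z_N | ab.1 + ab.2 == s) tens (X k k ab.1) (X k k ab.2).
Proof.
rewrite /bDelta DeltaXE /= tapp2_sum !sum_decomp; apply: eq_bigr => a _.
rewrite tapp2_tens /Rmat tapp2_sum.
under eq_bigr do rewrite tapp2_sum; under eq_bigr do under eq_bigr do rewrite tapp2_sum.
under eq_bigr do under eq_bigr do under eq_bigr do
  rewrite tapp2Z tapp2_tens adj_X_diag SX HmulX tensZl tensZr !hhscaleA.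
rewrite (big_only1 k) // => [|i hi _]; last first.
  rewrite big1 // => j _; rewrite big1 // => p _.
  have [->|hp] := eqVneq p 0; last by vanish hp.
  have -> : j + 0 + (i - j) = i by ring.
  by rewrite eq_sym; vanish hi.
rewrite (big_only1 (k + a)) // => [|j hj _]; last first.
  by rewrite big1 // => p _; rewrite eq_sym; vanish hj.
rewrite (big_only1 0) // => [|p hp _]; last by vanish hp.
rewrite /= mul0n mod0n expr0 invr1 mul1r.
have -> : k + a + 0 + (k - (k + a)) = k by ring.
have -> : - (k - (k + a)) = a by ring.
have -> : k + a + (k - (k + a)) = k by ring.
by rewrite !eqxx mul1r hhscale1r.
Qed.

Lemma bS_term (k s i j p i' j' p' : 'Z_N) :
  Hmul (Hmul (X j (j + p) (i - j)) (X j' (j' + p') (i' - j')))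
       (S (Hmul (Hmul (X i j p) (X k k s)) (S (X i' j' p'))))
  = hscale [&& i == k - s, j == k, p == s, i' == k, j' == k + s & p' == - s]%:R
           (X k k (- s)).
Proof.
have [/andP[/eqP-> /and5P[/eqP-> /eqP-> /eqP-> /eqP-> /eqP->]] | nE] :=
  boolP [&& _, _, _, _, _ & _].
  rewrite !(SX, HmulX, HmulZl, HmulZr, SZ, hscaleA) -!natrM !mulnb.
  have -> : k - s - k = - s by ring.
  have -> : k - (k + s) = - s by ring.
  have -> : k + s - s = k by ring.
  by rewrite subrK opprK !eqxx.
rewrite !(SX, HmulX, HmulZl, HmulZr, SZ, hscaleA) -!natrM !mulnb.
set c := [&& _, _ & _].
have /negbTE-> : ~~ c; last by rewrite /= !hscale0r.
apply: contra nE => /and3P[/and3P[/and3P[/andP[/eqP ej' /eqP ei'] /eqP ej /eqP ep]]].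
move=> /eqP ek /eqP ep' /eqP _ /eqP ei; subst j p j'.
have -> : p' = - s by rewrite ep' opprK.
have -> : i = k - s by rewrite -(subrK k i) ei; ring.
have -> : i' = k by rewrite -(subrK (k + s) i') -ei' ei; ring.
by rewrite !eqxx.
Qed.

Hypothesis N_gt1 : (1 < N)%N.
Hypothesis w_prim : N.-primitive_root w.

Lemma omega_opp_cancel (a b : 'Z_N) :
  a + b = 0 -> w ^- (nat_of_ord a) * w ^- (nat_of_ord b) = 1.
Proof.
move=> ab0; rewrite -invfM -exprD -(prim_expr_mod w_prim).
have -> : ((a + b) %% N)%N = nat_of_ord (a + b).
  change (((a + b) %% N)%N = ((nat_of_ord a + nat_of_ord b) %% (Zp_trunc N).+2)%N).
  by congr (_ %% _)%N; rewrite (Zp_cast N_gt1).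
by rewrite ab0 expr0 invr1.
Qed.

(* The braided antipode of a diagonal vector: after [bS_term], the six-fold
   sum collapses to the surviving term, whose omega-weights cancel. *)
Lemma bS_X_diag k s : bS w (X k k s) = X k k (- s).
Proof.
rewrite /bS /Rmat tapp_sum.
under eq_bigr do rewrite tapp_sum; under eq_bigr do under eq_bigr do rewrite tapp_sum.
under eq_bigr do under eq_bigr do under eq_bigr do
  rewrite tappZ tapp_tens tapp_sum hscale_sum.
under eq_bigr do under eq_bigr do under eq_bigr do under eq_bigr do
  rewrite tapp_sum hscale_sum.
under eq_bigr do under eq_bigr do under eq_bigr do under eq_bigr do under eq_bigr do
  rewrite tapp_sum hscale_sum.
under eq_bigr do under eq_bigr do under eq_bigr do under eq_bigr do under eq_bigr do
  under eq_bigr do rewrite tappZ tapp_tens bS_term !hscaleA.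
rewrite (big_only1 (k - s)) // => [|i hi _]; last by vanish_sums hi.
rewrite (big_only1 k) // => [|j hj _]; last by vanish_sums hj.
rewrite (big_only1 s) // => [|p hp _]; last by vanish_sums hp.
rewrite (big_only1 k) // => [|i' hi' _]; last by vanish_sums hi'.
rewrite (big_only1 (k + s)) // => [|j' hj' _]; last by vanish_sums hj'.
rewrite (big_only1 (- s)) // => [|p' hp' _]; last by vanish_sums hp'.
rewrite !eqxx !andbT mulr1n mulr1 omega_opp_cancel ?hscale1r //; ring.
Qed.

End Braiding.
End FaceAlgebra.

Theorem lemma4p1 (N : nat) (w : algC) (hN : (1 < N)%N) (hw : N.-primitive_root w) :
  (* _R H = C_H(H_s) is the span of the X^i_i(p) *)
  (forall x : H N, in_RH x <->
     exists c : 'Z_N -> 'Z_N -> algC,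
       x = \sum_(i : 'Z_N) \sum_(p : 'Z_N) hscale (c i p) (X i i p))
  (* multiplication *)
  /\ (forall i k p q : 'Z_N,
        bmul (X i i p) (X k k q) = hscale ((i == k) && (p == q))%:R (X i i p))
  (* unit *)
  /\ in_RH (Hone N) /\ Hone N = \sum_(i : 'Z_N) \sum_(p : 'Z_N) X i i p
  (* braided comultiplication *)
  /\ (forall k s : 'Z_N,
        bDelta w (X k k s)
        = \sum_(wq : 'Z_N * 'Z_N | wq.1 + wq.2 == s) tens (X k k wq.1) (X k k wq.2))
  (* counit *)
  /\ (forall i s : 'Z_N,
        eps_t (X i i s) = hscale (s == 0)%:R (\sum_(p : 'Z_N) X i i p))
  (* braided antipode *)
  /\ (forall k s : 'Z_N, bS w (X k k s) = X k k (- s)).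
Proof.
have one_diag : Hone N = diagsum (fun _ _ => 1).
  by apply: eq_bigr => i _; apply: eq_bigr => p _; rewrite hscale1r.
split; first exact: in_RH_diagsum.
split; first exact: bmul_X_diag.
split; first by rewrite one_diag; apply: diagsum_in_RH.
split; first by [].
split; first exact: bDelta_X_diag.
split; first exact: eps_t_X_diag.
exact: bS_X_diag.
Qed.
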